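(* Let $0<\alpha<\beta<\infty$, $\mathcal{F}\subset\mathcal{F}_B^{[\alpha,\beta]}$ star-shaped with $L_2$-diameter $d$, $N\in\mathbb{N}$, and define $\tau^*:=\sup\{\tau:N\tau^2\le\log\mathcal{M}^{\mathrm{loc}}_{\mathcal{F}}(\tau,c)\}$, where $c$ is a sufficiently large absolute constant. If $\epsilon<k/N$ for a constant $k>7$, then $$\max\{\tau^{*2}\wedge d^2,\ \epsilon\wedge d^2\}\asymp\tau^{*2}\wedge d^2$$ (equality up to constant factors).
   Context: $B\subseteq\mathbb{R}^p$ compact Borel with positive measure, $\mu$ a probability measure on $B$; $\mathcal{F}_B^{[\alpha,\beta]}$ the measurable $f:B\to[\alpha,\beta]$ with $\int_Bf\,d\mu=1$, $\|f-g\|_2=(\int_B(f-g)^2d\mu)^{1/2}$, $B_2(g,r)$ the closed $L_2$-ball; $\mathcal{F}$ star-shaped (some $f_0\in\mathcal{F}$ with $tf+(1-t)f_0\in\mathcal{F}$ for $f\in\mathcal{F},t\in[0,1]$). $\mathcal{M}(\eta,S)$ is the maximal cardinality of a subset of $S$ with pairwise $L_2$ distances $>\eta$, and $\mathcal{M}^{\mathrm{loc}}_{\mathcal{F}}(\tau,c)=\sup_{g\in\mathcal{F}}\mathcal{M}(\tau/c,\mathcal{F}\cap B_2(g,\tau))$. $a\asymp b$ means $a\lesssim b$ and $b\lesssim a$ with constants independent of $N,\epsilon$. *)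

From HB Require Import structures.
From mathcomp Require Import all_boot all_order all_algebra.
From mathcomp Require Import all_classical all_reals all_analysis.
Set Implicit Arguments. Unset Strict Implicit. Unset Printing Implicit Defensive.
Import Order.TTheory GRing.Theory Num.Theory.
Import numFieldNormedType.Exports.
Local Open Scope classical_set_scope.
Local Open Scope ring_scope.

Definition Rp (R : realType) (p : nat) := g_sigma_algebraType (@open 'rV[R]_p).

Section defs.
Context {R : realType} {p : nat}.
Local Notation T := (Rp R p).

Definition L2dist (mu : {measure set T -> \bar R}) (B : set T) (f g : T -> R) : R :=
  Num.sqrt (fine (\int[mu]_(x in B) ((f x - g x) ^+ 2)%:E)%E).

Definition densities (mu : {measure set T -> \bar R}) (B : set T) (alpha beta : R)
  : set (T -> R) :=
  [set f | measurable_fun B f /\ (forall x, B x -> alpha <= f x <= beta) /\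
           (\int[mu]_(x in B) (f x)%:E = 1)%E].

Definition star_shaped (F : set (T -> R)) : Prop :=
  exists2 f0, F f0 & forall f t, F f -> 0 <= t <= 1 ->
     F (fun x => t * f x + (1 - t) * f0 x).

Definition L2ball mu B (g : T -> R) (r : R) : set (T -> R) :=
  [set f | L2dist mu B f g <= r].

Definition L2diam mu B (F : set (T -> R)) : \bar R :=
  ereal_sup [set (L2dist mu B f g)%:E | f in F & g in F].

Definition packing mu B (eta : R) (S : set (T -> R)) : \bar R :=
  ereal_sup [set (n%:R)%:E | n in [set n : nat | exists P : 'I_n -> (T -> R),
     (forall i, S (P i)) /\
     (forall i j, i != j -> eta < L2dist mu B (P i) (P j))]].

Definition local_packing mu B (F : set (T -> R)) (tau c : R) : \bar R :=
  ereal_sup [set packing mu B (tau / c) (F `&` L2ball mu B g tau) | g in F].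

Definition elog (x : \bar R) : \bar R :=
  match x with
  | r%:E => (ln r)%:E
  | +oo%E => +oo%E
  | -oo%E => -oo%E
  end.

Definition tau_star mu B (F : set (T -> R)) (N : nat) (c : R) : \bar R :=
  ereal_sup [set tau%:E | tau in [set tau : R | 0 <= tau /\
     ((N%:R * tau ^+ 2)%:E <= elog (local_packing mu B F tau c))%E]].

End defs.

From HB Require Import structures.
From mathcomp Require Import all_boot all_order all_algebra.
From mathcomp Require Import all_classical all_reals all_analysis measurable_realfun.
From mathcomp Require Import ring lra.
Import Order.TTheory GRing.Theory Num.Theory.
Import numFieldNormedType.Exports.
Local Open Scope classical_set_scope.
Local Open Scope ring_scope.

(* If some f in F lies at distance r > 0 from the centre f0 of the star, the
   segment [f0, f] contains, for every tau <= r, a point at distance exactly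
   tau from f0, so M^loc(tau, c) >= 2 as soon as c > 1.  Hence tau^*^2 and d^2
   are both at least min(ln 2, r^2) / N, while eps < k / N: eps is dominated
   by tau^*^2 /\ d^2 with a constant depending only on k and r.  If there is
   no such f, F has diameter 0 and both sides vanish. *)

Section L2dist.
Context {R : realType} {p : nat}.
Local Notation T := (Rp R p).
Variables (mu : {measure set T -> \bar R}) (B : set T).

Lemma L2dist_ge0 (f g : T -> R) : 0 <= L2dist mu B f g.
Proof. exact: sqrtr_ge0. Qed.

Lemma L2dist_sym (f g : T -> R) : L2dist mu B f g = L2dist mu B g f.
Proof.
rewrite /L2dist; congr (Num.sqrt (fine _)); apply: eq_integral => x _.
by rewrite -sqrrN opprB.
Qed.

Lemma L2dist_self (f : T -> R) : L2dist mu B f f = 0.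
Proof.
rewrite /L2dist (eq_integral (fun _ => 0%E)) ?integral0 ?sqrtr0 // => x _.
by rewrite subrr expr0n.
Qed.

Lemma sqr_L2dist (f g : T -> R) :
  L2dist mu B f g ^+ 2 = fine (\int[mu]_(x in B) ((f x - g x) ^+ 2)%:E)%E.
Proof.
rewrite sqr_sqrtr // fine_ge0 // integral_ge0 // => x _.
by rewrite lee_fin sqr_ge0.
Qed.

Lemma measurable_sqr_diff (f g : T -> R) :
  measurable_fun B f -> measurable_fun B g ->
  measurable_fun B (fun x => ((f x - g x) ^+ 2)%:E).
Proof.
move=> mf mg; apply/(measurable_EFinP _ (fun x => (f x - g x) ^+ 2)).
exact: measurable_funX (measurable_funB mf mg).
Qed.

End L2dist.

Section L2dist_densities.
Context {R : realType} {p : nat}.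
Local Notation T := (Rp R p).
Context {mu : {measure set T -> \bar R}} {B : set T} {alpha beta : R}.
Hypotheses (mB : measurable B) (muB : mu B = 1%E).
Local Notation D := (densities mu B alpha beta).

Lemma integral_sqr_diff_fin_num {f g : T -> R} : D f -> D g ->
  (\int[mu]_(x in B) ((f x - g x) ^+ 2)%:E)%E \is a fin_num.
Proof.
move=> [mf [bf _]] [mg [bg _]].
have ge0 : (0 <= \int[mu]_(x in B) ((f x - g x) ^+ 2)%:E)%E.
  by apply: integral_ge0 => x _; rewrite lee_fin sqr_ge0.
rewrite ge0_fin_numE //; apply: (@le_lt_trans _ _ ((beta - alpha) ^+ 2)%:E).
  rewrite -[leRHS]mule1 -muB -integral_cst //.
  apply: ge0_le_integral => //; first by move=> x _; rewrite lee_fin sqr_ge0.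
    exact: measurable_sqr_diff.
  move=> x Bx; rewrite lee_fin.
  by have /andP[? ?] := bf x Bx; have /andP[? ?] := bg x Bx; nra.
exact: ltry.
Qed.

Lemma L2dist_convex {f f0 : T -> R} {t : R} : D f -> D f0 -> 0 <= t ->
  L2dist mu B (fun x => t * f x + (1 - t) * f0 x) f0 = t * L2dist mu B f f0.
Proof.
move=> Df Df0 t0; rewrite /L2dist.
transitivity (Num.sqrt (fine ((t ^+ 2)%:E *
                 \int[mu]_(x in B) ((f x - f0 x) ^+ 2)%:E)%E)).
  rewrite -ge0_integralZl_EFin ?sqr_ge0 //; first last.
  - exact: measurable_sqr_diff (proj1 Df) (proj1 Df0).
  - by move=> x _; rewrite lee_fin sqr_ge0.
  congr (Num.sqrt (fine _)); apply: eq_integral => x _.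
  by rewrite -EFinM; congr EFin; ring.
rewrite -(fineK (integral_sqr_diff_fin_num Df Df0)) -EFinM /=.
by rewrite sqrtrM ?sqr_ge0 // sqrtr_sqr ger0_norm.
Qed.

(* This quasi-triangle inequality is all that is needed to see that a set
   whose points are all at distance 0 from f0 has diameter 0. *)
Lemma sqr_L2dist_le {f g h : T -> R} : D f -> D g -> D h ->
  L2dist mu B f g ^+ 2 <= 2 * (L2dist mu B f h ^+ 2 + L2dist mu B h g ^+ 2).
Proof.
move=> Df Dg Dh; have [mf mg mh] := And3 (proj1 Df) (proj1 Dg) (proj1 Dh).
have m2 (u v : T -> R) : measurable_fun B u -> measurable_fun B v ->
    measurable_fun B (fun x => (2%:E * ((u x - v x) ^+ 2)%:E)%E).
  by move=> mu' mv; apply: emeasurable_funM => //; exact: measurable_sqr_diff.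
have nn (u v : T -> R) x : (0 <= 2%:E * ((u x - v x) ^+ 2)%:E)%E.
  by rewrite -EFinM lee_fin mulr_ge0 // sqr_ge0.
rewrite !sqr_L2dist mulrDr -lee_fin EFinD !EFinM.
have fineE (u v : T -> R) : D u -> D v ->
    (fine (\int[mu]_(x in B) ((u x - v x) ^+ 2)%:E))%:E =
    (\int[mu]_(x in B) ((u x - v x) ^+ 2)%:E)%E.
  by move=> Du Dv; rewrite fineK // integral_sqr_diff_fin_num.
rewrite !fineE //.
rewrite -!ge0_integralZl_EFin //; try by move=> x _; rewrite lee_fin sqr_ge0.
  2,3: exact: measurable_sqr_diff.
rewrite -ge0_integralD //; try by move=> x _; exact: nn.
  2,3: exact: m2.
apply: ge0_le_integral => //.
- by move=> x _; rewrite lee_fin sqr_ge0.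
- exact: measurable_sqr_diff.
- by apply: emeasurable_funD; exact: m2.
move=> x _; rewrite -!EFinM -EFinD lee_fin.
by have := sqr_ge0 ((f x - h x) - (h x - g x)); nra.
Qed.

End L2dist_densities.

Section packing.
Context {R : realType} {p : nat}.
Local Notation T := (Rp R p).
Context {mu : {measure set T -> \bar R}} {B : set T}.

Lemma L2diam_ge {F : set (T -> R)} {f g : T -> R} : F f -> F g ->
  ((L2dist mu B f g)%:E <= L2diam mu B F)%E.
Proof. by move=> Ff Fg; apply: ereal_sup_ubound; exists f => //; exists g. Qed.

Lemma L2diam_eq0 {alpha beta : R} {F : set (T -> R)} {f0 : T -> R} :
  measurable B -> mu B = 1%E -> F `<=` densities mu B alpha beta -> F f0 ->
  (forall f, F f -> L2dist mu B f f0 = 0) -> L2diam mu B F = 0%E.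
Proof.
move=> mB muB sF Ff0 f0_near; apply/le_anti/andP; split; last first.
  by apply: le_trans (L2diam_ge Ff0 Ff0); rewrite L2dist_self.
apply: ge_ereal_sup => _ [f Ff [g Fg <-]]; rewrite lee_fin.
have := sqr_L2dist_le mB muB (sF _ Ff) (sF _ Fg) (sF _ Ff0).
rewrite (f0_near f Ff) (L2dist_sym _ _ f0) (f0_near g Fg) expr0n /= addr0 mulr0.
by have := L2dist_ge0 mu B f g; nra.
Qed.

Lemma local_packing_ge2 {F : set (T -> R)} {g h : T -> R} {tau c : R} :
  F g -> F h -> tau / c < L2dist mu B h g <= tau ->
  (2%:E <= local_packing mu B F tau c)%E.
Proof.
move=> Fg Fh /andP[sep near]; apply: le_trans (ereal_sup_ubound _); last first.
  by exists g.
apply: ereal_sup_ubound; exists 2%N => //.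
have tau0 : 0 <= tau := le_trans (L2dist_ge0 mu B h g) near.
exists (fun i : 'I_2 => if val i == 0%N then g else h); split.
  by move=> [[|[|i]] Hi] //=; split; rewrite // /L2ball /= ?L2dist_self.
by move=> [[|[|i]] Hi] [[|[|j]] Hj] //= _; rewrite // L2dist_sym.
Qed.

Lemma tau_star_ge (F : set (T -> R)) (N : nat) (tau c : R) : 0 <= tau ->
  ((N%:R * tau ^+ 2)%:E <= elog (local_packing mu B F tau c))%E ->
  (tau%:E <= tau_star mu B F N c)%E.
Proof. by move=> tau0 Htau; apply: ereal_sup_ubound; exists tau. Qed.

End packing.

Lemma elog_ge_ln {R : realType} (x : R) (y : \bar R) :
  0 < x -> (x%:E <= y)%E -> ((ln x)%:E <= elog y)%E.
Proof.
move=> x0; case: y => [y||] //=; last by rewrite !leey.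
by rewrite !lee_fin => xy; rewrite ler_ln ?posrE // (lt_le_trans x0).
Qed.

Lemma mule_self_ge0 {R : realDomainType} (x : \bar R) : (0 <= x * x)%E.
Proof.
case: x => [r||] /=; last by rewrite mulNyNy.
  by rewrite -EFinM lee_fin -expr2 sqr_ge0.
by rewrite mulyy.
Qed.

Lemma sqr_le_mule_self {R : realDomainType} (a : R) (x : \bar R) :
  0 <= a -> (a%:E <= x)%E -> ((a ^+ 2)%:E <= x * x)%E.
Proof. by move=> a0 ax; rewrite expr2 EFinM lee_pmul. Qed.

Section star_shaped.
Context {R : realType} {p : nat}.
Local Notation T := (Rp R p).
Context {mu : {measure set T -> \bar R}} {B : set T} {alpha beta : R}.
Hypotheses (mB : measurable B) (muB : mu B = 1%E).
Context {F : set (T -> R)} {f0 f : T -> R}.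
Hypotheses (sF : F `<=` densities mu B alpha beta) (Ff0 : F f0) (Ff : F f).
Hypothesis star : forall g t, F g -> 0 <= t <= 1 ->
  F (fun x => t * g x + (1 - t) * f0 x).
Let r := L2dist mu B f f0.
Hypothesis r_gt0 : 0 < r.

Lemma local_packing_star_ge2 (tau c : R) : 1 < c -> 0 < tau <= r ->
  (2%:E <= local_packing mu B F tau c)%E.
Proof.
move=> c1 /andP[tau0 tau_r]; set t := tau / r.
have t01 : 0 <= t <= 1.
  by rewrite /t divr_ge0 ?(ltW tau0) ?(ltW r_gt0) //= ler_pdivrMr // mul1r.
apply: (local_packing_ge2 Ff0 (star f t Ff t01)).
rewrite (L2dist_convex mB muB (sF _ Ff) (sF _ Ff0)) ?(andP t01).1 //.
rewrite divfK ?gt_eqF // lexx andbT.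
by rewrite ltr_pdivrMr ?(lt_trans ltr01) // ltr_pMr.
Qed.

Lemma min_tau_star_diam_ge {N : nat} {c m : R} : 1 < c -> (0 < N)%N ->
  0 < m -> m <= ln 2 -> m <= r ^+ 2 ->
  ((m / N%:R)%:E <= Order.min (tau_star mu B F N c * tau_star mu B F N c)
                              (L2diam mu B F * L2diam mu B F))%E.
Proof.
move=> c1 N0 m0 m_ln2 m_r; have N0' : 0 < N%:R :> R by rewrite ltr0n.
have mN_r : m / N%:R <= r ^+ 2.
  by rewrite ler_pdivrMr // (le_trans m_r) // ler_peMr ?sqr_ge0 ?ler1n.
set tau := Num.sqrt (m / N%:R).
have tau2 : tau ^+ 2 = m / N%:R by rewrite sqr_sqrtr // divr_ge0 ?ltW.
have tau_gt0 : 0 < tau by rewrite sqrtr_gt0 divr_gt0.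
have tau_ge0 := ltW tau_gt0.
have tau_r : tau <= r by rewrite -ler_sqr ?nnegrE ?(ltW r_gt0) // tau2.
rewrite le_min -tau2; apply/andP; split; apply: sqr_le_mule_self => //.
  apply: tau_star_ge => //; rewrite tau2 mulrC divfK ?gt_eqF //.
  apply: (@le_trans _ _ (ln (2 : R))%:E); first by rewrite lee_fin.
  by apply: elog_ge_ln => //; apply: local_packing_star_ge2; rewrite ?tau_gt0.
by rewrite (le_trans _ (L2diam_ge Ff Ff0)) // lee_fin.
Qed.

End star_shaped.

Lemma max_le_scale {R : realDomainType} (u v : \bar R) (C : R) :
  1 <= C -> (0 <= u)%E -> (v <= C%:E * u)%E ->
  (Order.max u v <= C%:E * u /\ u <= C%:E * Order.max u v)%E.
Proof.
move=> C1 u0 vCu; have C1' : (1 <= C%:E)%E by rewrite lee_fin.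
split; first by rewrite ge_max vCu (lee_pemull u0 C1').
have u_max : (u <= Order.max u v)%E by rewrite le_max lexx.
exact: le_trans u_max (lee_pemull (le_trans u0 u_max) C1').
Qed.

Lemma mine_le_max1_mul {R : realFieldType} (y u : \bar R) (e a C : R) :
  0 < a -> e <= C * a -> (a%:E <= u)%E ->
  (Order.min e%:E y <= (Num.max 1 C)%:E * u)%E.
Proof.
move=> a0 eCa au; rewrite ge_min; apply/orP; left.
apply: le_trans (lee_wpmul2l _ au); last by rewrite lee_fin le_max ler01.
rewrite -EFinM lee_fin (le_trans eCa) // ler_wpM2r ?(ltW a0) //.
by rewrite le_max; apply/orP; right.
Qed.

Theorem mainTheorem5 (R : realType) :
  exists c0 : R, forall c : R, c0 <= c ->
  forall k : R, 7 < k ->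
  forall (p : nat) (B : set (Rp R p))
    (mu : probability (Rp R p) R) (alpha beta : R) (F : set (Rp R p -> R)),
    compact (B : set 'rV[R]_p) -> measurable B -> mu B = 1%E ->
    0 < alpha -> alpha < beta ->
    F `<=` densities mu B alpha beta -> star_shaped F ->
  exists C : R, 0 < C /\
  forall (N : nat) (eps : R), (0 < N)%N -> 0 < eps -> eps < k / N%:R ->
    let d2 := (L2diam mu B F * L2diam mu B F)%E in
    let t2 := (tau_star mu B F N c * tau_star mu B F N c)%E in
    let lhs := Order.max (Order.min t2 d2) (Order.min eps%:E d2) in
    (lhs <= C%:E * Order.min t2 d2 /\ Order.min t2 d2 <= C%:E * lhs)%E.
Proof.
exists 2 => c c2 k k7 p B mu alpha beta F _ mB muB _ _ sF [f0 Ff0 star].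
have c1 : 1 < c by rewrite (lt_le_trans _ c2) ?ltr1n.
have [[f [Ff r0]]|] := pselect (exists f, F f /\ 0 < L2dist mu B f f0);
  last first.
  move=> /forallNP f0_near.
  have diam0 : L2diam mu B F = 0%E.
    apply: (L2diam_eq0 mB muB sF Ff0) => f Ff; apply/eqP.
    rewrite eq_le L2dist_ge0 andbT leNgt.
    by apply/negP => ?; apply: (f0_near f).
  exists 1; split => // N eps _ eps0 _ d2 t2 lhs; apply: max_le_scale => //.
    by rewrite /t2 /d2 diam0 mul0e le_min mule_self_ge0 lexx.
  rewrite /t2 /d2 diam0 mul0e.
  by rewrite !min_r ?mule_self_ge0 ?lee_fin ?(ltW eps0) // mule0.
pose m := Num.min (ln (2 : R)) (L2dist mu B f f0 ^+ 2).
have m0 : 0 < m by rewrite lt_min ln_gt0 ?ltr1n ?exprn_gt0.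
exists (Num.max 1 (k / m)); split; first by rewrite lt_max ltr01.
move=> N eps N0 eps0 epsk d2 t2 lhs.
have mN : ((m / N%:R)%:E <= Order.min t2 d2)%E.
  apply: (min_tau_star_diam_ge mB muB sF Ff0 Ff star r0) => //.
    by rewrite /m ge_min lexx.
  by rewrite /m ge_min lexx orbT.
have N0' : 0 < N%:R :> R by rewrite ltr0n.
apply: max_le_scale; first by rewrite le_max lexx.
  by apply: le_trans mN; rewrite lee_fin divr_ge0 ?ler0n ?(ltW m0).
have eps_le : eps <= k / m * (m / N%:R) by rewrite mulrA divfK ?gt_eqF // ltW.
by apply: mine_le_max1_mul eps_le mN; rewrite divr_gt0.
Qed.
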